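(* Let $m\in\mathbb{N}$, $m\geq 2$, let $\Sigma\subset\{0,1,\dots,m-1\}^{\mathbb{N}}$ be a (one-sided) subshift of finite type, and let $$A=\Big\{\sum_{i=1}^\infty \frac{x_i}{m^i}:(x_i)\in\Sigma\Big\}.$$ If $A$ is nowhere dense in $[0,1]$, then for every $t\in(0,1)$ that has a universal $m$-adic expansion, $$A-t\subset\mathbb{Q}^c,\qquad A+t\subset\mathbb{Q}^c,\qquad \frac{A}{t}\subset\mathbb{Q}^c.$$ Moreover, if $t\in(1,\infty)$ and $1/t$ has a universal $m$-adic expansion, then $tA\subset\mathbb{Q}^c$.
   Context: An $m$-adic expansion of $t\in(0,1)$ is a sequence $(t_k)\in\{0,1,\dots,m-1\}^{\mathbb{N}}$ with $t=\sum_{k\geq1}t_k m^{-k}$. Such an expansion is universal if for every $k\geq1$ and every word $x_1\cdots x_k\in\{0,\dots,m-1\}^k$ there is $k_0\in\mathbb{N}$ with $t_{k_0+1}\cdots t_{k_0+k}=x_1\cdots x_k$; $t$ has a universal $m$-adic expansion if some $m$-adic expansion of it is universal. A subshift of finite type over $\{0,\dots,m-1\}$ is the set of sequences in $\{0,\dots,m-1\}^{\mathbb{N}}$ avoiding a given finite list of forbidden words. Notation: $A\pm t=\{x\pm t:x\in A\}$, $tA=\{tx:x\in A\setminus\{0\}\}$, $\frac{A}{t}=\{t^{-1}x:x\in A\setminus\{0\}\}$. $\mathbb{Q}^c$ denotes the set of irrational real numbers. *)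

From Stdlib Require Import Reals List QArith.
Open Scope R_scope.

(* A digit sequence over {0,...,m-1}, indexed from 0: x 0 plays the role of x_1. *)
Definition digit_seq (m : nat) (x : nat -> nat) : Prop := forall k, (x k < m)%nat.

Definition madic_value (m : nat) (x : nat -> nat) (t : R) : Prop :=
  infinite_sum (fun i => INR (x i) / (INR m) ^ (S i)) t.

Definition occurs_at (x : nat -> nat) (w : list nat) (k0 : nat) : Prop :=
  forall j, (j < length w)%nat -> x (k0 + j)%nat = nth j w 0%nat.

Definition SFT (m : nat) (F : list (list nat)) (x : nat -> nat) : Prop :=
  digit_seq m x /\ forall w, In w F -> forall k0, ~ occurs_at x w k0.

Definition SFT_set (m : nat) (F : list (list nat)) (y : R) : Prop :=
  exists x, SFT m F x /\ madic_value m x y.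

Definition is_expansion (m : nat) (t : R) (x : nat -> nat) : Prop :=
  digit_seq m x /\ madic_value m x t.

Definition universal (m : nat) (x : nat -> nat) : Prop :=
  forall w : list nat, (1 <= length w)%nat -> (forall a, In a w -> (a < m)%nat) ->
    exists k0, occurs_at x w k0.

Definition has_universal_expansion (m : nat) (t : R) : Prop :=
  exists x, is_expansion m t x /\ universal m x.

Definition in_closure01 (A : R -> Prop) (z : R) : Prop :=
  0 <= z <= 1 /\ forall eps, eps > 0 -> exists a, A a /\ 0 <= a <= 1 /\ Rabs (z - a) < eps.

Definition nowhere_dense01 (A : R -> Prop) : Prop :=
  ~ exists z eps, 0 <= z <= 1 /\ eps > 0 /\
      forall y, 0 <= y <= 1 -> Rabs (y - z) < eps -> in_closure01 A y.

Definition irrational (y : R) : Prop := ~ exists q : Q, Q2R q = y.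

(* Every case reduces to one statement (no_affine_relation): if y has a universal
   m-adic expansion, then there is no relation D y = B a + C with a in A and
   integers D, B nonzero.  Suppose there were.  Shifting the expansions k places
   replaces y by z = m^k y mod 1 and a by v = m^k a mod 1, which stays in A since
   Sigma is shift invariant, and keeps an integer relation D z = B v + i, where
   0 <= v <= 1 and 0 < z < 1 confine i to finitely many values.  So z lies in a
   finite union of affine images of A, which is nowhere dense; but universality
   of the expansion of y makes the orbit (m^k y mod 1) dense in [0,1]. *)

From Stdlib Require Import Reals List QArith ZArith Lra Lia Classical.
Open Scope R_scope.

Lemma cv_const (c : R) : Un_cv (fun _ => c) c.
Proof. intros eps Heps; exists 0%nat; intros n _; unfold Rdist; rewrite Rminus_diag, Rabs_R0; lra. Qed.

Section Expansions.
Variable m : nat.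
Hypothesis m_ge2 : (2 <= m)%nat.

Lemma m_gt1 : 1 < INR m.
Proof. apply (lt_INR 1); lia. Qed.

Lemma m_pow_unbounded (b : R) : exists L : nat, (1 <= L)%nat /\ b < INR m ^ L.
Proof.
  pose proof m_gt1.
  destruct (Pow_x_infinity (INR m) ltac:(rewrite Rabs_pos_eq; lra) (b + 1)) as [N HN].
  exists (S N); split; [lia|].
  specialize (HN (S N) ltac:(lia)); rewrite Rabs_pos_eq in HN by (apply pow_le; lra); lra.
Qed.

Definition shift (x : nat -> nat) (k : nat) : nat -> nat := fun i => x (k + i)%nat.

Fixpoint prefix_value (x : nat -> nat) (k : nat) : nat :=
  match k with O => O | S k' => (m * prefix_value x k' + x k')%nat end.

Lemma tail_partial_sum (x y : nat -> nat) : (forall i, y i = x (S i)) -> forall n,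
  sum_f_R0 (fun i => INR (y i) / INR m ^ S i) n =
  INR m * sum_f_R0 (fun i => INR (x i) / INR m ^ S i) (S n) - INR (x 0%nat).
Proof.
  intros Hy n. pose proof m_gt1.
  rewrite (decomp_sum _ (S n)) by lia; simpl Init.Nat.pred.
  rewrite Rmult_plus_distr_l, scal_sum.
  assert (Ht : sum_f_R0 (fun i => INR (y i) / INR m ^ S i) n =
               sum_f_R0 (fun i => INR (x (S i)) / INR m ^ S (S i) * INR m) n).
  { apply sum_eq; intros i _; rewrite Hy; simpl; field; split; [apply pow_nonzero|]; lra. }
  rewrite Ht; simpl; field; lra.
Qed.

Lemma madic_value_tail (x y : nat -> nat) (v : R) : (forall i, y i = x (S i)) ->
  madic_value m x v -> madic_value m y (INR m * v - INR (x 0%nat)).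
Proof.
  intros Hy Hv.
  apply (Un_cv_ext (fun n => INR m * sum_f_R0 (fun i => INR (x i) / INR m ^ S i) (S n) - INR (x 0%nat))).
  { intro n; symmetry; apply tail_partial_sum, Hy. }
  apply CV_minus; [|apply cv_const].
  apply CV_mult; [apply cv_const|].
  apply (Un_cv_ext (fun n => sum_f_R0 (fun i => INR (x i) / INR m ^ S i) (n + 1))).
  { intro n; f_equal; lia. }
  apply CV_shift', Hv.
Qed.

Lemma madic_value_shift (x : nat -> nat) (v : R) : madic_value m x v -> forall k,
  madic_value m (shift x k) (INR m ^ k * v - INR (prefix_value x k)).
Proof.
  intros Hv k; induction k as [|k IH].
  - simpl; replace (1 * v - 0) with v by ring; exact Hv.
  - apply (madic_value_tail (shift x k) (shift x (S k))) in IH.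
    2:{ intro i; unfold shift; f_equal; lia. }
    unfold shift at 2 in IH; rewrite Nat.add_0_r in IH.
    simpl prefix_value; rewrite plus_INR, mult_INR.
    replace (INR m ^ S k * v - (INR m * INR (prefix_value x k) + INR (x k)))
      with (INR m * (INR m ^ k * v - INR (prefix_value x k)) - INR (x k)) by (simpl; ring).
    exact IH.
Qed.

Lemma digit_term_bound (x : nat -> nat) (i : nat) : digit_seq m x ->
  0 <= INR (x i) / INR m ^ S i <= (INR m - 1) / INR m ^ S i.
Proof.
  intro Hd. pose proof m_gt1.
  assert (Hp : 0 < / INR m ^ S i) by (apply Rinv_0_lt_compat, pow_lt; lra).
  assert (Hx : INR (x i) <= INR m - 1).
  { rewrite <- INR_1, <- minus_INR by lia. apply le_INR. specialize (Hd i). lia. }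
  unfold Rdiv; split; [apply Rmult_le_pos; [apply pos_INR | lra]|].
  apply Rmult_le_compat_r; lra.
Qed.

(* The n-th partial sum is at most that of the expansion with all digits m - 1. *)
Lemma partial_sum_bound (x : nat -> nat) : digit_seq m x -> forall n,
  0 <= sum_f_R0 (fun i => INR (x i) / INR m ^ S i) n <= 1 - / INR m ^ S n.
Proof.
  intros Hd n. pose proof m_gt1.
  induction n as [|n IH]; cbn [sum_f_R0].
  - pose proof (digit_term_bound x 0 Hd) as Hb.
    replace (1 - / INR m ^ 1) with ((INR m - 1) / INR m ^ 1) by (simpl; field; lra). lra.
  - pose proof (digit_term_bound x (S n) Hd) as Hb.
    assert (E : 1 - / INR m ^ S n + (INR m - 1) / INR m ^ S (S n) = 1 - / INR m ^ S (S n)).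
    { simpl; field; split; [apply pow_nonzero|]; lra. }
    lra.
Qed.

Lemma madic_value_unit (x : nat -> nat) (v : R) :
  digit_seq m x -> madic_value m x v -> 0 <= v <= 1.
Proof.
  intros Hd Hv. pose proof m_gt1.
  assert (Hb : forall n, 0 <= sum_f_R0 (fun i => INR (x i) / INR m ^ S i) n <= 1).
  { intro n; pose proof (partial_sum_bound x Hd n).
    assert (0 < / INR m ^ S n) by (apply Rinv_0_lt_compat, pow_lt; lra). lra. }
  split.
  - apply (@Rle_cv_lim (fun _ => 0) _ _ _ (fun n => proj1 (Hb n)) (cv_const 0) Hv).
  - apply (@Rle_cv_lim _ (fun _ => 1) _ _ (fun n => proj2 (Hb n)) Hv (cv_const 1)).
Qed.

(* The L base-m digits of P, most significant first (P < m^L). *)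
Fixpoint base_digits (L P : nat) : list nat :=
  match L with
  | O => nil
  | S L' => base_digits L' (P / m) ++ (P mod m :: nil)
  end.

Lemma base_digits_length (L P : nat) : length (base_digits L P) = L.
Proof.
  revert P; induction L as [|L IH]; intro P; simpl; [reflexivity|].
  rewrite length_app, IH; simpl; lia.
Qed.

Lemma base_digits_lt (L P a : nat) : In a (base_digits L P) -> (a < m)%nat.
Proof.
  revert P; induction L as [|L IH]; intros P Ha; simpl in Ha; [contradiction|].
  apply in_app_or in Ha as [Ha|[<-|[]]]; [exact (IH _ Ha)|].
  apply Nat.mod_upper_bound; lia.
Qed.

(* A sequence beginning with the digits of P spells P in its first L places;
   by madic_value_shift its value then lies in the cylinder [P/m^L, (P+1)/m^L]. *)
Lemma prefix_value_base_digits (x : nat -> nat) (L P : nat) :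
  (P < m ^ L)%nat -> occurs_at x (base_digits L P) 0 -> prefix_value x L = P.
Proof.
  revert P; induction L as [|L IH]; intros P HP Hocc; simpl in *; [lia|].
  assert (Hlen : length (base_digits L (P / m)) = L) by apply base_digits_length.
  assert (Hlast : x L = P mod m).
  { pose proof (nth_middle (base_digits L (P / m)) nil (P mod m) 0%nat) as Hnth.
    rewrite Hlen in Hnth; rewrite <- Hnth; apply (Hocc L).
    rewrite length_app; simpl; lia. }
  rewrite (IH (P / m)%nat), Hlast; [symmetry; apply Nat.div_mod_eq| |].
  - apply Nat.Div0.div_lt_upper_bound; exact HP.
  - intros j Hj; rewrite <- (app_nth1 _ (P mod m :: nil)) by exact Hj.
    apply Hocc; rewrite length_app; simpl; lia.
Qed.

Lemma universal_orbit_dense (y c d : R) : has_universal_expansion m y ->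
  0 <= c -> c < d -> d <= 1 -> exists k M : nat, c < INR m ^ k * y - INR M < d.
Proof.
  intros [u [[Hud Huv] Huniv]] Hc Hcd Hd. pose proof m_gt1.
  (* cylinders of length L have width 1/m^L < (d - c)/2 *)
  destruct (m_pow_unbounded (2 / (d - c))) as [L [HL HQ]].
  set (Q := INR m ^ L) in *.
  assert (HQpos : 0 < Q) by (apply pow_lt; lra).
  apply (Rmult_lt_compat_r (d - c)) in HQ; [|lra].
  replace (2 / (d - c) * (d - c)) with 2 in HQ by (field; lra).
  (* the cylinder [P/Q, (P+1)/Q] lies inside (c, d) *)
  destruct (archimed (c * Q)) as [Hup1 Hup2].
  assert (Hup0 : (0 <= up (c * Q))%Z) by (apply le_IZR; simpl; nra).
  set (P := Z.to_nat (up (c * Q))).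
  assert (HP : INR P = IZR (up (c * Q))) by (unfold P; rewrite INR_IZR_INZ, Z2Nat.id; auto).
  assert (HPL : (P < m ^ L)%nat) by (apply INR_lt; rewrite pow_INR; fold Q; nra).
  destruct (Huniv (base_digits L P)) as [k Hk].
  { rewrite base_digits_length; exact HL. }
  { apply base_digits_lt. }
  set (z := INR m ^ k * y - INR (prefix_value u k)).
  assert (Hz : madic_value m (shift u k) z) by (apply madic_value_shift, Huv).
  assert (Hpre : prefix_value (shift u k) L = P) by (apply prefix_value_base_digits; assumption).
  pose proof (madic_value_shift _ _ Hz L) as Hzz. rewrite Hpre in Hzz.
  apply madic_value_unit in Hzz; [|intro i; apply Hud].
  fold Q in Hzz.
  exists k, (prefix_value u k); fold z.
  split; apply (Rmult_lt_reg_r Q); nra.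
Qed.
End Expansions.

Definition free_subinterval (B : R -> Prop) (c d : R) : Prop :=
  exists c' d', c <= c' /\ c' < d' /\ d' <= d /\ forall w, B w -> ~ (c' < w < d').

Section Gaps.
Variable A : R -> Prop.
Hypothesis A_unit : forall v, A v -> 0 <= v <= 1.
Hypothesis A_nowhere_dense : nowhere_dense01 A.

(* Nowhere density, unfolded: inside [0,1] a point y outside the closure of A
   has a whole neighbourhood free of A. *)
Lemma free_subinterval_unit (c d : R) : 0 <= c -> c < d -> d <= 1 -> free_subinterval A c d.
Proof.
  intros Hc Hcd Hd.
  assert (Hy : exists y, c < y < d /\ ~ in_closure01 A y).
  { apply NNPP; intro Hall; apply A_nowhere_dense.
    exists ((c + d) / 2), ((d - c) / 2); split; [lra|split; [lra|]].
    intros y Hy01 Hyz; apply Rabs_def2 in Hyz.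
    apply NNPP; intro Hny; apply Hall; exists y; split; [lra|exact Hny]. }
  destruct Hy as [y [Hyc Hny]].
  assert (Heps : exists eps, eps > 0 /\ forall a, A a -> eps <= Rabs (y - a)).
  { apply NNPP; intro Hall; apply Hny; split; [lra|].
    intros eps Heps; apply NNPP; intro Hfar; apply Hall; exists eps; split; [exact Heps|].
    intros a Ha; apply Rnot_lt_le; intro Hnear; apply Hfar.
    exists a; split; [exact Ha|split; [apply A_unit, Ha|exact Hnear]]. }
  destruct Heps as [eps [Heps Hfar]].
  exists (Rmax c (y - eps)), (Rmin d (y + eps)).
  split; [apply Rmax_l|split; [apply Rmax_lub_lt; apply Rmin_glb_lt; lra|split; [apply Rmin_l|]]].
  intros a Ha [Ha1 Ha2]; specialize (Hfar a Ha).
  pose proof (Rmax_r c (y - eps)); pose proof (Rmin_r d (y + eps)).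
  assert (Rabs (y - a) < eps) by (apply Rabs_def1; lra); lra.
Qed.

(* Since A lies in [0,1], the same holds for arbitrary intervals. *)
Lemma free_subinterval_any (c d : R) : c < d -> free_subinterval A c d.
Proof.
  intro Hcd.
  destruct (Rle_lt_dec d 0) as [Hd|Hd]; [|destruct (Rle_lt_dec 1 c) as [Hc|Hc]].
  1, 2: exists c, d; do 3 (split; [lra|]); intros v Hv; pose proof (A_unit v Hv); lra.
  destruct (free_subinterval_unit (Rmax c 0) (Rmin d 1)) as [c' [d' [H1 [H2 [H3 Hfree]]]]].
  - apply Rmax_r.
  - apply Rmax_lub_lt; apply Rmin_glb_lt; lra.
  - apply Rmin_r.
  - exists c', d'; pose proof (Rmax_l c 0); pose proof (Rmin_l d 1).
    do 3 (split; [lra|]); exact Hfree.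
Qed.

Lemma free_subinterval_affine_pos (s e c d : R) : 0 < s -> c < d ->
  free_subinterval (fun w => exists v, A v /\ w = s * v + e) c d.
Proof.
  intros Hs Hcd.
  destruct (free_subinterval_any ((c - e) / s) ((d - e) / s)) as [c' [d' [H1 [H2 [H3 Hfree]]]]].
  { apply Rmult_lt_compat_r; [apply Rinv_0_lt_compat|]; lra. }
  exists (s * c' + e), (s * d' + e).
  apply (Rmult_le_compat_l s) in H1, H3; [|lra..]; apply (Rmult_lt_compat_l s) in H2; [|lra].
  replace (s * ((c - e) / s)) with (c - e) in H1 by (field; lra).
  replace (s * ((d - e) / s)) with (d - e) in H3 by (field; lra).
  do 3 (split; [lra|]).
  intros w [v [Hv ->]] Hin; apply (Hfree v Hv).
  split; apply (Rmult_lt_reg_l s); lra.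
Qed.

Lemma free_subinterval_affine (s e c d : R) : s <> 0 -> c < d ->
  free_subinterval (fun w => exists v, A v /\ w = s * v + e) c d.
Proof.
  intros Hs Hcd; destruct (Rlt_dec 0 s) as [Hpos|Hneg].
  - apply free_subinterval_affine_pos; assumption.
  - destruct (free_subinterval_affine_pos (- s) (- e) (- d) (- c)) as [c' [d' [H1 [H2 [H3 Hfree]]]]];
      [lra|lra|].
    exists (- d'), (- c'); do 3 (split; [lra|]).
    intros w [v [Hv ->]] Hin; apply (Hfree (- (s * v + e))); [exists v; split; [exact Hv|ring]|lra].
Qed.

Lemma free_subinterval_translates (s : R) (e : nat -> R) (n : nat) (c d : R) : s <> 0 -> c < d ->
  free_subinterval (fun w => exists j v, (j < n)%nat /\ A v /\ w = s * v + e j) c d.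
Proof.
  intro Hs; revert c d; induction n as [|n IH]; intros c d Hcd.
  - exists c, d; do 3 (split; [lra|]); intros w [j [v [Hj _]]]; lia.
  - destruct (IH c d Hcd) as [c1 [d1 [H1 [H2 [H3 Hfree1]]]]].
    destruct (free_subinterval_affine s (e n) c1 d1 Hs H2) as [c2 [d2 [G1 [G2 [G3 Hfree2]]]]].
    exists c2, d2; do 3 (split; [lra|]).
    intros w [j [v [Hj [Hv ->]]]] Hin.
    destruct (Nat.eq_dec j n) as [->|Hjn].
    + apply (Hfree2 (s * v + e n)); [exists v; split; [exact Hv|reflexivity]|exact Hin].
    + apply (Hfree1 (s * v + e j)); [exists j, v; repeat split; [lia|exact Hv]|lra].
Qed.
End Gaps.

Lemma SFT_shift (m : nat) (F : list (list nat)) (x : nat -> nat) (k : nat) :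
  SFT m F x -> SFT m F (shift x k).
Proof.
  intros [Hd Hforb]; split; [intro i; apply Hd|].
  intros w Hw k0 Hocc; apply (Hforb w Hw (k + k0)%nat).
  intros j Hj; rewrite <- (Hocc j Hj); unfold shift; f_equal; lia.
Qed.

Lemma SFT_set_unit (m : nat) (F : list (list nat)) (a : R) :
  (2 <= m)%nat -> SFT_set m F a -> 0 <= a <= 1.
Proof. intros Hm [x [[Hd _] Hx]]; exact (madic_value_unit m Hm x a Hd Hx). Qed.

Lemma SFT_set_shift (m : nat) (F : list (list nat)) (a : R) (k : nat) :
  (2 <= m)%nat -> SFT_set m F a -> exists N : nat, SFT_set m F (INR m ^ k * a - INR N).
Proof.
  intros Hm [x [Hx Hxa]]; exists (prefix_value m x k), (shift x k); split.
  - apply SFT_shift, Hx.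
  - apply madic_value_shift; assumption.
Qed.

Lemma integer_relation_range (D B i : Z) (z v : R) : (0 < D)%Z -> 0 < z < 1 -> 0 <= v <= 1 ->
  IZR i = IZR D * z - IZR B * v -> (- Z.abs B < i < D + Z.abs B)%Z.
Proof.
  intros HD Hz Hv Hi.
  assert (HDr : 0 < IZR D) by (apply IZR_lt; exact HD).
  assert (HBv : Rabs (IZR B * v) <= IZR (Z.abs B)).
  { rewrite abs_IZR, Rabs_mult, (Rabs_pos_eq v) by lra.
    pose proof (Rabs_pos (IZR B)); nra. }
  pose proof (Rle_abs (IZR B * v)); pose proof (Rle_abs (- (IZR B * v))); rewrite Rabs_Ropp in *.
  split; apply lt_IZR; [rewrite opp_IZR|rewrite plus_IZR]; nra.
Qed.

Lemma no_affine_relation_pos (m : nat) (F : list (list nat)) (a y : R) (D B C : Z) :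
  (2 <= m)%nat -> nowhere_dense01 (SFT_set m F) -> SFT_set m F a ->
  has_universal_expansion m y -> (0 < D)%Z -> (B <> 0)%Z -> IZR D * y <> IZR B * a + IZR C.
Proof.
  intros Hm ND Ha Hu HD HB Heq.
  assert (HDr : 0 < IZR D) by (apply IZR_lt; exact HD).
  set (K := Z.abs B).
  (* the translates (B A + i) / D for -K < i < D + K, indexed by j = i + K *)
  set (s := IZR B / IZR D).
  set (e := fun j : nat => (INR j - IZR K) / IZR D).
  destruct (free_subinterval_translates (SFT_set m F) (fun v => SFT_set_unit m F v Hm) ND
              s e (Z.to_nat (D + 2 * K)) 0 1) as [lo [hi [Hlo [Hlohi [Hhi Hfree]]]]].
  { apply Rmult_integral_contrapositive_currified;
      [apply not_0_IZR, HB|apply Rinv_neq_0_compat; lra]. }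
  { lra. }
  (* some point z of the orbit of y falls into the free interval (lo, hi) *)
  destruct (universal_orbit_dense m Hm y lo hi Hu Hlo Hlohi Hhi) as [k [M Hz]].
  destruct (SFT_set_shift m F a k Hm Ha) as [N Hv].
  set (z := INR m ^ k * y - INR M) in *.
  set (v := INR m ^ k * a - INR N) in *.
  (* the relation persists along the orbit: D z - B v is an integer i *)
  set (i := (B * Z.of_nat N + Z.of_nat (m ^ k) * C - D * Z.of_nat M)%Z).
  assert (Hi : IZR i = IZR D * z - IZR B * v).
  { unfold i, z, v; rewrite minus_IZR, !plus_IZR, !mult_IZR, <- !INR_IZR_INZ, pow_INR.
    replace (IZR D * (INR m ^ k * y - INR M) - IZR B * (INR m ^ k * a - INR N))
      with (INR m ^ k * (IZR D * y - IZR B * a) - IZR D * INR M + IZR B * INR N) by ring.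
    rewrite Heq; ring. }
  pose proof (integer_relation_range D B i z v HD ltac:(lra) (SFT_set_unit m F v Hm Hv) Hi)
    as Hrange.
  (* hence z = s v + e j lies in one of the translates, contradicting freeness *)
  apply (Hfree z); [|lra].
  exists (Z.to_nat (i + K)), v; split; [lia|split; [exact Hv|]].
  unfold s, e; rewrite INR_IZR_INZ, Z2Nat.id by lia; rewrite plus_IZR, Hi; field; lra.
Qed.

Lemma no_affine_relation (m : nat) (F : list (list nat)) (a y : R) (D B C : Z) :
  (2 <= m)%nat -> nowhere_dense01 (SFT_set m F) -> SFT_set m F a ->
  has_universal_expansion m y -> (D <> 0)%Z -> (B <> 0)%Z -> IZR D * y <> IZR B * a + IZR C.
Proof.
  intros Hm ND Ha Hu HD HB Heq; destruct (Z_lt_le_dec 0 D) as [Hpos|Hneg].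
  - exact (no_affine_relation_pos m F a y D B C Hm ND Ha Hu Hpos HB Heq).
  - apply (no_affine_relation_pos m F a y (- D) (- B) (- C)); try assumption || lia.
    rewrite !opp_IZR; lra.
Qed.

Lemma rational_cleared (q : Q) (r : R) : Q2R q = r -> IZR (Z.pos (Qden q)) * r = IZR (Qnum q).
Proof.
  intros <-; unfold Q2R; field.
  apply not_0_IZR; discriminate.
Qed.

Lemma rational_numerator_nonzero (q : Q) : Q2R q <> 0 -> Qnum q <> 0%Z.
Proof. intros Hq Hnum; apply Hq; unfold Q2R; rewrite Hnum; ring. Qed.

Theorem corollary3 (m : nat) (F : list (list nat)) :
  (2 <= m)%nat ->
  nowhere_dense01 (SFT_set m F) ->
  (forall t : R, 0 < t < 1 -> has_universal_expansion m t ->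
     (forall a, SFT_set m F a -> irrational (a - t)) /\
     (forall a, SFT_set m F a -> irrational (a + t)) /\
     (forall a, SFT_set m F a -> a <> 0 -> irrational (a / t))) /\
  (forall t : R, 1 < t -> has_universal_expansion m (/ t) ->
     forall a, SFT_set m F a -> a <> 0 -> irrational (t * a)).
Proof.
  intros Hm ND; split.
  - intros t Ht Hu; split; [|split].
    (* a - t = p/q gives q t = q a - p *)
    + intros a Ha [q Hq]; apply rational_cleared in Hq.
      apply (no_affine_relation m F a t (Z.pos (Qden q)) (Z.pos (Qden q)) (- Qnum q)); try easy.
      rewrite opp_IZR, <- Hq; ring.
    (* a + t = p/q gives q t = - q a + p *)
    + intros a Ha [q Hq]; apply rational_cleared in Hq.
      apply (no_affine_relation m F a t (Z.pos (Qden q)) (- Z.pos (Qden q)) (Qnum q)); try easy.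
      rewrite opp_IZR, <- Hq; ring.
    (* a / t = p/q gives p t = q a, with p <> 0 since a <> 0 *)
    + intros a Ha Ha0 [q Hq].
      apply (no_affine_relation m F a t (Qnum q) (Z.pos (Qden q)) 0); try easy.
      * apply rational_numerator_nonzero; rewrite Hq.
        apply Rmult_integral_contrapositive_currified; [|apply Rinv_neq_0_compat]; lra.
      * apply rational_cleared in Hq; rewrite <- Hq; field; lra.
  (* t a = p/q gives p (1/t) = q a, with p <> 0 since a <> 0 *)
  - intros t Ht Hu a Ha Ha0 [q Hq].
    apply (no_affine_relation m F a (/ t) (Qnum q) (Z.pos (Qden q)) 0); try easy.
    + apply rational_numerator_nonzero; rewrite Hq.
      apply Rmult_integral_contrapositive_currified; lra.
    + apply rational_cleared in Hq; rewrite <- Hq; field; lra.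
Qed.
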